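(* Let $\Gamma\subset U_+$ be a non-commutative, torsion-free complex Kleinian group and let $\Gamma_p$ be the subgroup of $\Gamma$ generated by all parabolic elements of $\Gamma$. Suppose $\Gamma_p$ is conjugate in $\mathrm{PSL}(3,\mathbb{C})$ to a group $$\Gamma_{\mathbf{w}}=\left\langle g_{1,0},\ g_{c,d},\ \begin{bmatrix}1&x&y\\0&1&1\\0&0&1\end{bmatrix}\right\rangle,\qquad g_{s,t}=\begin{bmatrix}1&s&t\\0&1&0\\0&0&1\end{bmatrix},$$ where $\mathbf{w}=(x,y,p,q,r)$ with $x,y\in\mathbb{C}$, $p,q,r\in\mathbb{Z}$, $p,q$ coprime, $q^2$ divides $r$, $c=pq^{-1}$ and $d=r^{-1}$. If $\mathrm{rank}(\Gamma_{\mathbf{w}})=3$, then $\Gamma$ contains no loxodromic elements.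
   Context: $U_+\subset\mathrm{PSL}(3,\mathbb{C})$ is the subgroup of elements admitting an upper triangular lift in $\mathrm{SL}(3,\mathbb{C})$. A complex Kleinian group is a discrete subgroup of $\mathrm{PSL}(3,\mathbb{C})$ acting properly discontinuously on some nonempty open invariant subset of $\mathbb{CP}^2$. An element of $\mathrm{PSL}(3,\mathbb{C})$ is parabolic if it has a non-diagonalizable lift in $\mathrm{SL}(3,\mathbb{C})$ all of whose eigenvalues have modulus $1$, and loxodromic if it has a lift in $\mathrm{SL}(3,\mathbb{C})$ with an eigenvalue of modulus different from $1$. Torsion-free means the only element of finite order is the identity. The rank of a finitely generated group is its minimal number of generators. *)

From HB Require Import structures.
From mathcomp Require Import all_boot all_order all_algebra.
From mathcomp Require Import all_classical all_reals all_analysis.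
From mathcomp Require Import complex.
Import Order.TTheory GRing.Theory Num.Theory.
Import numFieldTopology.Exports.
Import numFieldNormedType.Exports.

Set Implicit Arguments.
Unset Strict Implicit.
Unset Printing Implicit Defensive.

Local Open Scope ring_scope.
Local Open Scope classical_set_scope.

(* The complex numbers are R[i] for R : realType.  We equip R[i] with its
   usual (norm-induced) topology; 'M[R[i]]_(m,n) then gets the product
   topology, i.e. the usual topology of C^(m*n). *)
HB.instance Definition _ (R : realType) :=
  PseudoPointedMetric.copy (R[i]) ((R[i])^o).

Notation mx3 R := ('M[(R[i])]_3).
Notation cv3 R := ('cV[(R[i])]_3).

(* A subgroup Gamma of PSL(3,C) is represented by
   its full preimage in GL(3,C) : a set of invertible matrices containing all
   nonzero scalar matrices and closed under products and inverses.  Two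
   matrices represent the same element of PSL(3,C) iff [peq]. *)

Definition peq (R : realType) (A B : mx3 R) : Prop :=
  exists l : R[i], l != 0 /\ A = l *: B.

Definition is_pgroup (R : realType) (G : set (mx3 R)) : Prop :=
  [/\ (forall A, G A -> A \in unitmx),
      (forall a : R[i], a != 0 -> G a%:M),
      (forall A B, G A -> G B -> G (A *m B)) &
      (forall A, G A -> G (invmx A))].

(* The subgroup of PSL(3,C) generated by (the classes of) a set S of
   invertible matrices, represented by its full preimage. *)
Inductive pgen (R : realType) (S : set (mx3 R)) : mx3 R -> Prop :=
| pgen_scalar (a : R[i]) : a != 0 -> pgen S a%:M
| pgen_gen A : S A -> pgen S A
| pgen_mul A B : pgen S A -> pgen S B -> pgen S (A *m B)
| pgen_inv A : pgen S A -> pgen S (invmx A).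

Definition SL_lift (R : realType) (A B : mx3 R) : Prop :=
  \det B = 1 /\ exists l : R[i], B = l *: A.

Definition upper_triangular (R : realType) (B : mx3 R) : Prop :=
  forall i j : 'I_3, (j < i)%N -> B i j = 0.

Definition in_Uplus (R : realType) (A : mx3 R) : Prop :=
  exists B, SL_lift A B /\ upper_triangular B.

Definition parabolic (R : realType) (A : mx3 R) : Prop :=
  exists B, SL_lift A B /\ ~ diagonalizable B /\
    (forall a : R[i], eigenvalue B a -> `|a| = 1).

Definition loxodromic (R : realType) (A : mx3 R) : Prop :=
  exists B, SL_lift A B /\ exists a : R[i], eigenvalue B a /\ `|a| != 1.

Definition torsion_free (R : realType) (G : set (mx3 R)) : Prop :=
  forall A (n : nat), G A -> (0 < n)%N -> peq (A ^+ n) 1 -> peq A 1.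

Definition non_commutative (R : realType) (G : set (mx3 R)) : Prop :=
  exists A B, G A /\ G B /\ ~ peq (A *m B) (B *m A).

(* Discreteness in PSL(3,C) (quotient topology of SL(3,C) -> PSL(3,C)):
   every element has a neighbourhood containing no other element of G. *)
Definition SL_part (R : realType) (G : set (mx3 R)) : set (mx3 R) :=
  [set B | G B /\ \det B = 1].

Definition pdiscrete (R : realType) (G : set (mx3 R)) : Prop :=
  forall B, SL_part G B ->
    exists U : set (mx3 R), nbhs B U /\
      (forall B', U B' -> SL_part G B' -> peq B' B).

(* Open subsets of CP^2 are represented by their preimages in C^3 \ {0}:
   open cones of nonzero vectors. *)
Definition open_cone (R : realType) (W : set (cv3 R)) : Prop :=
  [/\ open W, ~ W 0 & forall v (l : R[i]), W v -> l != 0 -> W (l *: v)].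

Definition invariant (R : realType) (G : set (mx3 R)) (W : set (cv3 R)) : Prop :=
  forall A v, G A -> W v -> W (A *m v).

(* Proper discontinuity on W: for every compact K of the projective set
   (every compact of CP^2 inside W is the image of a compact of C^3 inside
   the cone W), only finitely many elements gamma of G (finitely many classes
   in PSL(3,C)) satisfy gamma K /\ K <> empty. *)
Definition prop_discontinuous (R : realType) (G : set (mx3 R)) (W : set (cv3 R)) : Prop :=
  forall K : set (cv3 R), compact K -> K `<=` W ->
    exists L : seq (mx3 R), forall A, G A ->
      (exists v w (l : R[i]), K v /\ K w /\ A *m v = l *: w) ->
      exists2 B, B \in L & peq A B.

Definition complex_kleinian (R : realType) (G : set (mx3 R)) : Prop :=
  [/\ is_pgroup G, pdiscrete G &
      exists W : set (cv3 R), open_cone W /\ W !=set0 /\ invariant G W /\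
        prop_discontinuous G W].

Definition group_rank (R : realType) (G : set (mx3 R)) (n : nat) : Prop :=
  (exists s : seq (mx3 R), size s = n /\ (forall A, pgen [set` s] A <-> G A)) /\
  (forall s : seq (mx3 R), (forall A, pgen [set` s] A <-> G A) -> (n <= size s)%N).

Definition unip (R : realType) (a b e : R[i]) : mx3 R :=
  \matrix_(i < 3, j < 3)
    (if i == j then 1
     else if ((i : nat) == 0%N) && ((j : nat) == 1%N) then a
     else if ((i : nat) == 0%N) && ((j : nat) == 2%N) then b
     else if ((i : nat) == 1%N) && ((j : nat) == 2%N) then e
     else 0).

Definition g_st (R : realType) (s t : R[i]) : mx3 R := unip s t 0.

Definition Gamma_w (R : realType) (x y : R[i]) (p q r : int) : set (mx3 R) :=
  pgen [set g_st 1 0; g_st (p%:~R / q%:~R) (r%:~R)^-1; unip x y 1].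

Definition Gamma_p (R : realType) (G : set (mx3 R)) : set (mx3 R) :=
  pgen [set A | G A /\ parabolic A].

Definition pconjugate (R : realType) (G H : set (mx3 R)) : Prop :=
  exists P : mx3 R, P \in unitmx /\ (forall A, G A <-> H (P *m A *m invmx P)).

(* Conjugation by an element of G preserves parabolicity, so it normalizes
   Gamma_p; transporting an SL(3,C) lift of A in G by the matrix conjugating
   Gamma_p onto Gamma_w gives a matrix T normalizing Gamma_w in both directions.
   Every element of Gamma_w is a scalar times an upper unipotent matrix with an
   integer (2,3) entry.  Intertwining T with g_{1,0} and
   U = [[1,x,y],[0,1,1],[0,0,1]] forces T to be upper triangular, with T11 and
   T22 integer multiples of each other.  T acts on the centre {g_{0,t}} of
   Gamma_w by t |-> (T00/T22) t, and that centre only contains t in (qr)^-1 Z;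
   hence no power of T00/T22 or of its inverse comes close to 0, so
   |T00/T22| = 1.  The three diagonal entries thus have a common modulus, whose
   cube is |det T| = 1, and the eigenvalues of T are its diagonal entries. *)

From HB Require Import structures.
From mathcomp Require Import all_boot all_order all_algebra.
From mathcomp Require Import all_classical all_reals all_analysis.
From mathcomp Require Import complex ring.
Import Order.TTheory GRing.Theory Num.Theory numFieldNormedType.Exports.
Set Implicit Arguments.
Unset Strict Implicit.
Unset Printing Implicit Defensive.
Local Open Scope ring_scope.
Local Open Scope classical_set_scope.

Lemma mulr_eq_id (F : idomainType) (a l : F) : a * l = a -> a = 0 \/ l = 1.
Proof.
have [-> | a0] := eqVneq a 0; first by left.
by rewrite -{2}[a]mulr1 => /(mulfI a0); right.
Qed.

Lemma norm_intr_ge1 (F : numDomainType) (m : int) : m != 0 -> 1 <= `|m%:~R : F|.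
Proof. by move=> m0; rewrite -intr_norm ler1z -gtz0_ge1 normr_gt0. Qed.

Lemma norm_eq_intr_mul (F : numDomainType) (a b : F) (e e' : int) :
  a = e%:~R * b -> b = e'%:~R * a -> `|a| = `|b|.
Proof.
move=> Ea Eb; have [a0|a0] := eqVneq a 0; first by rewrite Eb a0 mulr0.
have e0 : e != 0 by apply: contraNneq a0 => e0; rewrite Ea e0 mulr0z mul0r.
have e0' : e' != 0.
  by apply: contraNneq a0 => e0'; rewrite Ea Eb e0' mulr0z mul0r mulr0.
apply/le_anti/andP; split.
- by rewrite Eb normrM ler_peMl ?norm_intr_ge1.
- by rewrite Ea normrM ler_peMl ?norm_intr_ge1.
Qed.

Lemma norm_ratz_ge (F : numFieldType) (m N : int) :
  N != 0 -> m%:~R / N%:~R != 0 :> F -> `|N%:~R : F|^-1 <= `|m%:~R / N%:~R : F|.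
Proof.
move=> N0 mN0; have m0 : m != 0 by apply: contraNneq mN0 => ->; rewrite mul0r.
by rewrite normrM normfV ler_peMl ?invr_ge0 ?norm_intr_ge1.
Qed.

Lemma expr_lbounded_ge1 (R : archiRealFieldType) (rho eps : R) :
  0 <= rho -> 0 < eps -> (forall n, eps <= rho ^+ n) -> 1 <= rho.
Proof.
move=> rho0 eps0 lb; rewrite leNgt; apply/negP => rho1.
have rho1' : `|rho| < 1 by rewrite ger0_norm.
have /cvgr0_norm_lt/(_ _ eps0) [N _ /(_ N (leqnn N))] := cvg_expr rho1'.
by rewrite /= normrX ger0_norm // ltNge lb.
Qed.

Lemma expr_bounded_eq1 (R : archiRealFieldType) (rho eps : R) :
  0 < rho -> 0 < eps -> (forall n, eps <= rho ^+ n) ->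
  (forall n, eps <= rho^-1 ^+ n) -> rho = 1.
Proof.
move=> rho0 eps0 lb lbV.
apply/le_anti; rewrite (expr_lbounded_ge1 (ltW rho0) eps0 lb).
by rewrite -invf_ge1 // (expr_lbounded_ge1 _ eps0 lbV) // invr_ge0 ltW.
Qed.

Lemma normC_eq1_ratz_powers (R : realType) (lam : R[i]) (N : int) :
  lam != 0 -> N != 0 ->
  (forall n, exists m : int, lam ^+ n = m%:~R / N%:~R) ->
  (forall n, exists m : int, lam^-1 ^+ n = m%:~R / N%:~R) -> `|lam| = 1.
Proof.
move=> lam0 N0 ratz ratzV.
have /complex_realP [rho erho] := normr_real lam.
have rho0 : 0 < rho by rewrite -ltcR -erho normr_gt0.
have lb z : z != 0 -> (exists m : int, z = m%:~R / N%:~R) ->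
    ((`|N|%:~R : R)^-1)%:C%C <= `|z|.
  move=> z0 [m ez]; subst z.
  by rewrite fmorphV rmorph_int intr_norm norm_ratz_ge.
suff rho1 : rho = 1 by rewrite erho rho1.
have normX (z : R[i]) (s : R) n : `|z| = s%:C%C -> `|z ^+ n| = (s ^+ n)%:C%C.
  by move=> ez; rewrite normrX ez rmorphXn.
have erhoV : `|lam^-1| = (rho^-1)%:C%C by rewrite normfV erho fmorphV.
apply: (@expr_bounded_eq1 _ _ ((`|N|%:~R : R)^-1)) => // [|n|n].
- by rewrite invr_gt0 ltr0z normr_gt0.
- by rewrite -lecR -(normX _ _ _ erho) lb ?expf_neq0.
- by rewrite -lecR -(normX _ _ _ erhoV) lb ?expf_neq0 ?invr_eq0.
Qed.

Section MatrixFacts.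
Variables (F : fieldType) (n : nat).
Implicit Types A B Q : 'M[F]_n.

Lemma mulmx1_invmx A B : A *m B = 1%:M -> invmx A = B.
Proof.
move=> AB1; have [uA _] := mulmx1_unit AB1.
by rewrite -[invmx A]mulmx1 -AB1 mulmxA mulVmx ?mul1mx.
Qed.

Lemma invmxM A B : A \in unitmx -> B \in unitmx ->
  invmx (A *m B) = invmx B *m invmx A.
Proof.
move=> uA uB; apply: mulmx1_invmx.
by rewrite mulmxA -(mulmxA A) mulmxV // mulmx1 mulmxV.
Qed.

Lemma eigenvalue_conj Q B a : Q \in unitmx ->
  eigenvalue (Q *m B *m invmx Q) a = eigenvalue B a.
Proof.
move=> uQ; apply/eigenvalueP/eigenvalueP => -[v Ev v0].
- exists (v *m Q); first by rewrite scalemxAl -Ev !mulmxA mulmxKV.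
  by apply: contra_neq v0 => vQ0; rewrite -(mulmxK uQ v) vQ0 mul0mx.
- exists (v *m invmx Q); first by rewrite !mulmxA mulmxKV // Ev -scalemxAl.
  by apply: contra_neq v0 => vQ0; rewrite -(mulmxKV uQ v) vQ0 mul0mx.
Qed.

Lemma diagonalizable_conj Q B : Q \in unitmx ->
  diagonalizable (Q *m B *m invmx Q) -> diagonalizable B.
Proof.
move=> uQ [P uP diagP]; have uPQ : P *m Q \in unitmx by rewrite unitmx_mul uP.
exists (P *m Q) => //.
by move: diagP; rewrite /similar_to (conjumx _ uP) (conjumx _ uPQ) invmxM // !mulmxA.
Qed.

Lemma char_poly_trmx A : char_poly A^T = char_poly A.
Proof.
by rewrite /char_poly -det_tr /char_poly_mx linearB /= tr_scalar_mx map_trmx trmxK.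
Qed.

Lemma eigenvalue_trmx A a : eigenvalue A^T a = eigenvalue A a.
Proof. by rewrite !eigenvalue_root_char char_poly_trmx. Qed.

Lemma eigenvalue_trig A a : is_trig_mx A -> eigenvalue A a -> exists i, a = A i i.
Proof.
move=> trigA; rewrite eigenvalue_root_char char_poly_trig //.
rewrite -(big_map (fun i => A i i) xpredT (fun b => 'X - b%:P)) root_prod_XsubC.
by case/mapP => i _ ->; exists i.
Qed.

Lemma trig_unitmx_diag_neq0 A i : is_trig_mx A -> A \in unitmx -> A i i != 0.
Proof.
move=> trigA; rewrite unitmxE det_trig // unitfE => /prodf_neq0; exact.
Qed.

Lemma invmx_conj Q B : Q \in unitmx -> B \in unitmx ->
  invmx (Q *m B *m invmx Q) = Q *m invmx B *m invmx Q.
Proof.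
move=> uQ uB; rewrite !invmxM ?unitmx_mul ?uQ ?uB ?unitmx_inv // invmxK.
by rewrite mulmxA.
Qed.

Lemma det_conj Q B : Q \in unitmx -> \det (Q *m B *m invmx Q) = \det B.
Proof.
by move=> uQ; rewrite !det_mulmx det_inv mulrAC mulrV ?mul1r -?unitmxE.
Qed.

End MatrixFacts.

Lemma mulmx3E (K : pzSemiRingType) m n (A : 'M[K]_(m, 3)) (B : 'M[K]_(3, n))
    i j :
  (A *m B) i j = A i 0 * B 0 j + A i 1 * B 1 j + A i 2 * B 2 j.
Proof.
rewrite mxE !big_ord_recr big_ord0 /= add0r.
by congr (A i _ * B _ j + A i _ * B _ j + A i _ * B _ j); apply: val_inj.
Qed.

Lemma ord3E (i : 'I_3) : [\/ i = 0, i = 1 | i = 2].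
Proof.
by case: i => [[|[|[|//]]]] Hi;
  [constructor 1 | constructor 2 | constructor 3]; apply: val_inj.
Qed.

Section Unipotent.
Variable R : realType.
Local Notation C := (R[i]).

Lemma unipM (a b e a' b' e' : C) :
  unip a b e *m unip a' b' e' = unip (a + a') (b + b' + a * e') (e + e').
Proof.
apply/matrixP => i j; rewrite mulmx3E !mxE.
by case: (ord3E i) => ->; case: (ord3E j) => ->; rewrite /=; ring.
Qed.

Lemma unip0 : unip 0 0 0 = 1%:M :> mx3 R.
Proof.
apply/matrixP => i j; rewrite !mxE.
by case: (ord3E i) => ->; case: (ord3E j) => ->.
Qed.

Lemma unip_mulmxV (a b e : C) : unip a b e *m unip (- a) (a * e - b) (- e) = 1%:M.
Proof. by rewrite unipM -unip0; congr unip; ring. Qed.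

Lemma unipV (a b e : C) : invmx (unip a b e) = unip (- a) (a * e - b) (- e).
Proof. exact/mulmx1_invmx/unip_mulmxV. Qed.

Lemma unip_unitmx (a b e : C) : unip a b e \in unitmx.
Proof. by have [] := mulmx1_unit (unip_mulmxV a b e). Qed.

Lemma upper_triangular3 (T : mx3 R) :
  T 1 0 = 0 -> T 2 0 = 0 -> T 2 1 = 0 -> upper_triangular T.
Proof.
move=> T10 T20 T21 i j.
by case: (ord3E i) => ->; case: (ord3E j) => ->.
Qed.

Lemma trig_mul_center (T : mx3 R) t : upper_triangular T -> T 2 2 != 0 ->
  T *m unip 0 t 0 = unip 0 (T 0 0 / T 2 2 * t) 0 *m T.
Proof.
move=> upT T22; have [T10 T20 T21] : [/\ T 1 0 = 0, T 2 0 = 0 & T 2 1 = 0].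
  by split; apply: upT.
apply/matrixP => i j; rewrite !mulmx3E !mxE.
by case: (ord3E i) => ->; case: (ord3E j) => ->; rewrite /= ?T10 ?T20 ?T21; field.
Qed.

Lemma upper_triangular_trig (T : mx3 R) : upper_triangular T -> is_trig_mx T^T.
Proof. by move=> upT; apply/is_trig_mxP => i j ij; rewrite mxE upT. Qed.

End Unipotent.

Section GammaW.
Variables (R : realType) (x y : R[i]) (p q r : int).
Hypotheses (q0 : q != 0) (r0 : r != 0).
Local Notation Gw := (Gamma_w x y p q r).

(* The x e(e-1)/2 term is the one appearing in U^e. *)
Definition gw_word (e k m : int) : mx3 R :=
  unip (k%:~R / q%:~R + e%:~R * x)
       (m%:~R / (q%:~R * r%:~R) + e%:~R * y + x * (e%:~R * (e%:~R - 1) / 2))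
       e%:~R.

Let qC : q%:~R != 0 :> R[i]. Proof. by rewrite intr_eq0. Qed.
Let rC : r%:~R != 0 :> R[i]. Proof. by rewrite intr_eq0. Qed.

Lemma gw_word0 : gw_word 0 0 0 = 1%:M.
Proof. by rewrite -unip0; congr unip; rewrite ?rmorph0; field; rewrite ?qC ?rC. Qed.

Lemma gw_wordM e k m e' k' m' :
  gw_word e k m *m gw_word e' k' m' = gw_word (e + e') (k + k') (m + m' + k * e' * r).
Proof.
by rewrite unipM; congr unip; rewrite ?rmorphD ?rmorphM /=; field; rewrite ?qC ?rC.
Qed.

Lemma gw_wordV e k m : invmx (gw_word e k m) = gw_word (- e) (- k) (- m + k * e * r).
Proof.
apply: mulmx1_invmx; rewrite gw_wordM -gw_word0; congr gw_word; ring.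
Qed.

Lemma Gamma_w_word A :
  Gw A -> exists l e k m, l != 0 /\ A = l *: gw_word e k m.
Proof.
elim=> {A} [a a0 | A gA
          | A B _ [l [e [k [m [l0 ->]]]]] _ [l' [e' [k' [m' [l0' ->]]]]]
          | A _ [l [e [k [m [l0 ->]]]]]].
- by exists a, 0, 0, 0; rewrite gw_word0 scalemx1.
- case: gA => [[->|->]|->];
    [exists 1, 0, q, 0 | exists 1, 0, p, q | exists 1, 1, 0, 0];
    rewrite oner_neq0 scale1r; split => //; congr unip;
    by rewrite ?rmorph0 ?rmorph1; field; rewrite ?qC ?rC.
- exists (l * l'), (e + e'), (k + k'), (m + m' + k * e' * r).
  by rewrite mulf_neq0 // -scalemxAl -scalemxAr scalerA gw_wordM.
- exists l^-1, (- e), (- k), (- m + k * e * r).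
  by rewrite invr_eq0 l0 invmxZ ?unitmxZ ?unitfE ?unip_unitmx // gw_wordV.
Qed.

Lemma Gamma_w_unip A :
  Gw A -> exists l s t (e : int), l != 0 /\ A = l *: unip s t e%:~R.
Proof.
by case/Gamma_w_word => [l [e [k [m [l0 ->]]]]]; exists l; do 2!eexists; exists e.
Qed.

Lemma Gamma_w_center t :
  Gw (unip 0 t 0) -> exists m : int, t = m%:~R / (q * r)%:~R.
Proof.
case/Gamma_w_word => [l [e [k [m [_ E]]]]]; exists m.
have Eij i j := congr1 (fun M : mx3 R => M i j) E.
move: (Eij 0 0) (Eij 1 2) (Eij 0 2); rewrite !mxE /= mulr1 => <-.
by rewrite !mul1r => <- ->; rewrite rmorphM; ring.
Qed.

Lemma Gamma_w_g10 : Gw (unip 1 0 0).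
Proof. by apply: pgen_gen; left; left. Qed.

Lemma Gamma_w_U : Gw (unip x y 1).
Proof. by apply: pgen_gen; right. Qed.

Lemma Gamma_w_g01 : Gw (unip 0 1 0).
Proof.
have -> : unip 0 1 0 =
    unip 1 0 0 *m unip x y 1 *m invmx (unip 1 0 0) *m invmx (unip x y 1).
  by rewrite !unipV !unipM; congr unip; ring.
apply: pgen_mul; last exact/pgen_inv/Gamma_w_U.
apply: pgen_mul; last exact/pgen_inv/Gamma_w_g10.
exact: pgen_mul Gamma_w_g10 Gamma_w_U.
Qed.

End GammaW.

Definition normalizes (R : realType) (T : mx3 R) (H : set (mx3 R)) : Prop :=
  forall h, H h -> H (T *m h *m invmx T).

Section CenterOrbit.
Variable R : realType.
Implicit Types (Q : mx3 R) (c : R[i]).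

Lemma center_commuteV Q c : Q \in unitmx -> c != 0 ->
  (forall t, Q *m unip 0 t 0 = unip 0 (c * t) 0 *m Q) ->
  forall t, invmx Q *m unip 0 t 0 = unip 0 (c^-1 * t) 0 *m invmx Q.
Proof.
move=> uQ c0 Qc t; have := Qc (c^-1 * t); rewrite mulrA divff // mul1r => E.
by rewrite -[LHS](mulmxK uQ) -(mulmxA (invmx Q)) -E mulmxA mulVmx ?mul1mx.
Qed.

Lemma normalizes_center_orbit (H : set (mx3 R)) Q c :
  Q \in unitmx -> normalizes Q H ->
  (forall t, Q *m unip 0 t 0 = unip 0 (c * t) 0 *m Q) ->
  H (unip 0 1 0) -> forall n, H (unip 0 (c ^+ n) 0).
Proof.
move=> uQ nQ Qc H1; elim=> [|n IH]; first by rewrite expr0.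
by rewrite exprS -(mulmxK uQ (unip 0 _ 0)) -Qc; exact: nQ.
Qed.

End CenterOrbit.

Section Normalizer.
Variables (R : realType) (x y : R[i]) (p q r : int).
Hypotheses (q0 : q != 0) (r0 : r != 0).
Local Notation Gw := (Gamma_w x y p q r).
Variable T : mx3 R.
Hypotheses (uT : T \in unitmx) (nT : normalizes T Gw) (nTV : normalizes (invmx T) Gw).

Lemma normalizer_intertwine A : Gw A ->
  exists l s t (e : int), l != 0 /\ (l *: unip s t e%:~R) *m T = T *m A.
Proof.
move=> /nT/(Gamma_w_unip q0 r0) [l [s [t [e [l0 E]]]]].
by exists l, s, t, e; rewrite -E mulmxKV.
Qed.

Lemma normalizer_intertwineV A : Gw A ->
  exists l s t (e : int), l != 0 /\ A *m T = T *m (l *: unip s t e%:~R).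
Proof.
move=> /nTV/(Gamma_w_unip q0 r0) [l [s [t [e [l0 E]]]]].
by exists l, s, t, e; rewrite -E invmxK !mulmxA mulmxV ?mul1mx.
Qed.

Lemma normalizer_col0 : T 1 0 = 0 /\ T 2 0 = 0.
Proof.
have [l [s [t [e [_ E]]]]] := normalizer_intertwineV (Gamma_w_g10 x y p q r).
have [l' [s' [t' [e' [_ E']]]]] := normalizer_intertwineV (Gamma_w_U x y p q r).
have Ei0 i := congr1 (fun M : mx3 R => M i 0) E.
have E'i0 i := congr1 (fun M : mx3 R => M i 0) E'.
move: (Ei0 0) (Ei0 1) (E'i0 1) (E'i0 2); rewrite !mulmx3E !mxE /=.
rewrite !(mul0r, mul1r, mulr0, mulr1, add0r, addr0) => E00 E10 E'10 E'20.
have T20 : T 2 0 = 0.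
  case: (mulr_eq_id (esym E'20)) => // l'1.
  by move: E'10; rewrite l'1 mulr1 -[RHS]addr0 => /addrI.
split => //; case: (mulr_eq_id (esym E10)) => // l1.
by move: E00; rewrite l1 mulr1 -[RHS]addr0 => /addrI.
Qed.

Lemma normalizer_row2 : T 2 1 = 0.
Proof.
have [_ T20] := normalizer_col0.
have [l [s [t [e [_ E]]]]] := normalizer_intertwine (Gamma_w_U x y p q r).
have E2j j := congr1 (fun M : mx3 R => M 2 j) E.
move: (E2j 1) (E2j 2); rewrite !mulmx3E !mxE /= T20.
rewrite !(mul0r, mul1r, mulr0, mulr1, add0r, addr0) => E21 E22.
case: (mulr_eq_id (etrans (mulrC _ _) E21)) => // l1.
by move: E22; rewrite l1 mul1r -{1}[T 2 2]add0r => /addIr/esym.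
Qed.

Lemma normalizer_upper_triangular : upper_triangular T.
Proof.
by have [T10 T20] := normalizer_col0; apply: upper_triangular3 normalizer_row2.
Qed.

Lemma normalizer_diag_neq0 i : T i i != 0.
Proof.
have := trig_unitmx_diag_neq0 i (upper_triangular_trig normalizer_upper_triangular).
by rewrite unitmx_tr mxE; apply.
Qed.

Lemma normalizer_norm11 : `|T 1 1| = `|T 2 2|.
Proof.
have [T10 T20] := normalizer_col0.
have [l [s [t [e [_ E]]]]] := normalizer_intertwine (Gamma_w_U x y p q r).
have [l' [s' [t' [e' [_ E']]]]] := normalizer_intertwineV (Gamma_w_U x y p q r).
have Eij i j := congr1 (fun M : mx3 R => M i j) E.
have E'ij i j := congr1 (fun M : mx3 R => M i j) E'.
move: (Eij 0 0) (Eij 1 2) (E'ij 0 0) (E'ij 1 2); rewrite !mulmx3E !mxE /= T10 T20.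
rewrite !(mul0r, mul1r, mulr0, mulr1, add0r, addr0) => E00 E12 E'00 E'12.
have T00 := normalizer_diag_neq0 0.
have l1 : l = 1.
  by case: (mulr_eq_id (etrans (mulrC _ _) E00)) => // /eqP; rewrite (negbTE T00).
have l'1 : l' = 1.
  by case: (mulr_eq_id (esym E'00)) => // /eqP; rewrite (negbTE T00).
apply: (@norm_eq_intr_mul _ _ _ e e').
- by apply: (addIr (T 1 2)); rewrite -E12 l1 !mul1r addrC.
- by apply: (addrI (T 1 2)); rewrite E'12 l'1 mulr1 mul1r addrC mulrC.
Qed.

Lemma normalizer_norm00 : `|T 0 0| = `|T 2 2|.
Proof.
have T00 := normalizer_diag_neq0 0; have T22 := normalizer_diag_neq0 2.
have c0 : T 0 0 / T 2 2 != 0 by rewrite mulf_neq0 ?invr_eq0.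
have Tc t := trig_mul_center t normalizer_upper_triangular T22.
have orbit := normalizes_center_orbit uT nT Tc (Gamma_w_g01 x y p q r).
have uTV : invmx T \in unitmx by rewrite unitmx_inv.
have orbitV := normalizes_center_orbit uTV nTV
  (center_commuteV uT c0 Tc) (Gamma_w_g01 x y p q r).
have := normC_eq1_ratz_powers c0 (mulf_neq0 q0 r0)
  (fun n => Gamma_w_center q0 r0 (orbit n)) (fun n => Gamma_w_center q0 r0 (orbitV n)).
by rewrite normrM normfV => /divr1_eq.
Qed.

Lemma normalizer_eigenvalue_norm1 a : \det T = 1 -> eigenvalue T a -> `|a| = 1.
Proof.
move=> detT; have trigT := upper_triangular_trig normalizer_upper_triangular.
have normT i : `|T i i| = `|T 2 2|.
  by case: (ord3E i) => ->; rewrite ?normalizer_norm00 ?normalizer_norm11.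
have T22 : `|T 2 2| ^+ 3 = 1.
  rewrite -[RHS]normr1 -detT -det_tr det_trig // normr_prod.
  by under eq_bigr => i _ do rewrite mxE normT; rewrite prodr_const card_ord.
rewrite -eigenvalue_trmx => /(eigenvalue_trig trigT) [i ->].
by rewrite mxE normT; apply/eqP; rewrite -(pexpr_eq1 (n := 3)) ?T22.
Qed.

End Normalizer.

Section ProjectiveGroups.
Variable R : realType.
Implicit Types (G H K S : set (mx3 R)) (A B P Q : mx3 R).

Lemma pgen_unitmx S A : (forall B, S B -> B \in unitmx) -> pgen S A -> A \in unitmx.
Proof.
move=> uS; elim=> {A} [a a0 | A /uS // | A B _ uA _ uB | A _ uA].
- by rewrite unitmxE det_scalar unitfE expf_neq0.
- by rewrite unitmx_mul uA.
- by rewrite unitmx_inv.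
Qed.

Lemma parabolic_conj Q A : Q \in unitmx -> parabolic A -> parabolic (Q *m A *m invmx Q).
Proof.
move=> uQ [B [[detB [l eB]] [ndB eigB]]].
exists (Q *m B *m invmx Q); split; [split | split].
- by rewrite det_conj.
- by exists l; rewrite eB -scalemxAr -scalemxAl.
- by move/(diagonalizable_conj uQ).
- by move=> a; rewrite eigenvalue_conj //; apply: eigB.
Qed.

Lemma pgroup_SL_lift G A B : is_pgroup G -> G A -> SL_lift A B -> G B.
Proof.
case=> _ scalG mulG _ GA [detB [l eB]].
have l0 : l != 0.
  by apply: contra_eq_neq detB => l0; rewrite eB l0 scale0r det0 eq_sym oner_eq0.
by rewrite eB -mul_scalar_mx; exact: mulG (scalG _ l0) GA.
Qed.

Lemma Gamma_p_normalized G Q : is_pgroup G -> G Q -> normalizes Q (Gamma_p G).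
Proof.
case=> uG _ mulG invG GQ; have uQ := uG _ GQ.
move=> h; elim=> {h} [a a0 | A [GA parA] | A B _ nA _ nB | A pA nA].
- by rewrite scalar_mxC mulmxK //; apply: pgen_scalar.
- apply: pgen_gen; split; last exact: parabolic_conj.
  exact: mulG (mulG _ _ GQ GA) (invG _ GQ).
- have -> : Q *m (A *m B) *m invmx Q = (Q *m A *m invmx Q) *m (Q *m B *m invmx Q).
    by rewrite !mulmxA mulmxKV.
  exact: pgen_mul.
- have uA : A \in unitmx by apply: pgen_unitmx pA => B [/uG].
  by rewrite -(invmxK Q) -invmx_conj ?unitmx_inv // invmxK; apply: pgen_inv.
Qed.

Lemma normalizes_pconjugate H K P Q : P \in unitmx -> Q \in unitmx ->
  (forall A, H A <-> K (P *m A *m invmx P)) -> normalizes Q H ->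
  normalizes (P *m Q *m invmx P) K.
Proof.
move=> uP uQ conjHK nQ h Kh.
have HPh : H (invmx P *m h *m P).
  by apply/conjHK; rewrite !mulmxA mulmxV // mul1mx mulmxK.
by move/nQ/conjHK: HPh; rewrite invmx_conj // !mulmxA.
Qed.

End ProjectiveGroups.

Theorem mainTheorem6 (R : realType) (G : set (mx3 R))
  (x y : R[i]) (p q r : int) :
  complex_kleinian G ->
  (forall A, G A -> in_Uplus A) ->
  non_commutative G ->
  torsion_free G ->
  coprimez p q -> q != 0 -> r != 0 -> (q ^+ 2 %| r)%Z ->
  pconjugate (Gamma_p G) (Gamma_w x y p q r) ->
  group_rank (Gamma_w x y p q r) 3 ->
  forall A, G A -> ~ loxodromic A.
Proof.
move=> [pgG _ _] _ _ _ _ q0 r0 _ [P [uP conjP]] _ A GA [B [liftB [a [eigB na]]]].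
have GB := pgroup_SL_lift pgG GA liftB.
have [uG _ _ invG] := pgG; have uB := uG _ GB.
have uT : P *m B *m invmx P \in unitmx by rewrite !unitmx_mul uP uB unitmx_inv.
have nT := normalizes_pconjugate uP uB conjP (Gamma_p_normalized pgG GB).
have nTV : normalizes (invmx (P *m B *m invmx P)) (Gamma_w x y p q r).
  have uBV : invmx B \in unitmx by rewrite unitmx_inv.
  rewrite invmx_conj //.
  exact: normalizes_pconjugate uP uBV conjP (Gamma_p_normalized pgG (invG _ GB)).
have detT : \det (P *m B *m invmx P) = 1 by rewrite det_conj //; case: liftB.
have eigT : eigenvalue (P *m B *m invmx P) a by rewrite eigenvalue_conj.
by rewrite (normalizer_eigenvalue_norm1 q0 r0 uT nT nTV detT eigT) eqxx in na.
Qed.
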